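(* Let $Z$ be the precubical set with exactly one cube $z^n$ in each dimension $n\ge0$, and let $J(S^1)=J(S^1,1)$ be the James construction on the circle. The map $f:|Z|\to J(S^1)$ given by $f([z^n;x_1,\dots,x_n])=(e^{2\pi i x_1},\dots,e^{2\pi i x_n})$ is a well-defined homeomorphism.
   Context: A precubical set $K$ has sets $K[n]$ of $n$-cubes and face maps $d^\varepsilon_i:K[n]\to K[n-1]$ ($1\le i\le n$, $\varepsilon\in\{0,1\}$); for $Z$ necessarily $d^\varepsilon_i z^n=z^{n-1}$. The geometric realization $|K|=\coprod_n K[n]\times[0,1]^n/\sim$, with $(d^\varepsilon_i c,\mathbf x)\sim(c,\delta^\varepsilon_i\mathbf x)$ where $\delta^\varepsilon_i(x_1,\dots,x_{n-1})=(x_1,\dots,x_{i-1},\varepsilon,x_i,\dots,x_{n-1})$, carries the quotient topology; $[c;\mathbf x]$ is the class. For a pointed space $(X,x_0)$, $J_n(X)$ is the quotient of $X^n$ by $(x_1,\dots,x_i,x_0,x_{i+1},\dots,x_{n-1})\sim(x_1,\dots,x_0,x_i,x_{i+1},\dots,x_{n-1})$ (moving the base point), with inclusions $J_n(X)\subseteq J_{n+1}(X)$ appending $x_0$ in the last position, and $J(X)=\mathrm{colim}_n J_n(X)$ (the free topological monoid on $(X,x_0)$); the class of $(y_1,\dots,y_n)$ is written $(y_1,\dots,y_n)$. *)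

From HB Require Import structures.
From mathcomp Require Import all_boot all_order all_algebra.
From mathcomp Require Import generic_quotient.
From mathcomp Require Import all_classical all_reals.
From mathcomp Require Import topology normedtype trigo.
Import numFieldNormedType.Exports.
From Stdlib Require Import Relations.Relation_Operators.

Set Implicit Arguments.
Unset Strict Implicit.
Unset Printing Implicit Defensive.
Import Order.TTheory GRing.Theory Num.Theory.
Local Open Scope classical_set_scope.
Local Open Scope ring_scope.
Local Open Scope quotient_scope.

Section GenQuot.
Context {T : topologicalType} (r : T -> T -> Prop).

Definition gen_equiv : rel T :=
  fun x y => `[< clos_refl_sym_trans T r x y >].

Lemma gen_equiv_refl : reflexive gen_equiv.
Proof. by move=> x; apply/asboolP; apply: rst_refl. Qed.
Lemma gen_equiv_sym : symmetric gen_equiv.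
Proof.
move=> x y; apply/asboolP/asboolP => h; exact: rst_sym.
Qed.
Lemma gen_equiv_trans : transitive gen_equiv.
Proof.
move=> y x z /asboolP h1 /asboolP h2; apply/asboolP; exact: rst_trans h1 h2.
Qed.

Definition gen_equiv_rel : equiv_rel T :=
  EquivRel gen_equiv gen_equiv_refl gen_equiv_sym gen_equiv_trans.

Definition quot_space : topologicalType :=
  quotient_topology {eq_quot gen_equiv_rel}.

Definition quot_pi : T -> quot_space := \pi_quot_space.
End GenQuot.

Definition homeomorphism {X Y : topologicalType} (f : X -> Y) : Prop :=
  exists g : Y -> X, [/\ cancel f g, cancel g f, continuous f & continuous g].

Section Defs.
Variable R : realType.

Definition insert_at {S : Type} {n : nat} (i : 'I_n.+1) (e : S)
  (x : 'rV[S]_n) : 'rV[S]_n.+1 :=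
  \row_j match unlift i j with None => e | Some k => x ord0 k end.

Definition cube (n : nat) : set 'rV[R]_n :=
  [set x | forall j, 0 <= x ord0 j <= 1].
Arguments cube n : clear implicits.

(** disjoint union  coprod_n Z[n] x [0,1]^n  (Z[n] is a singleton) *)
Definition ZDom : topologicalType := {n : nat & set_type (cube n)}.

(** (d^e_i z^{n+1}, x) ~ (z^{n+1}, delta^e_i x) *)
Definition Zrel (p q : ZDom) : Prop :=
  exists (n : nat) (x : set_type (cube n)) (y : set_type (cube n.+1))
         (i : 'I_n.+1) (e : bool),
    [/\ p = existT _ n x, q = existT _ n.+1 y &
        \val y = insert_at i (e%:R) (\val x)].

Definition realZ : topologicalType := quot_space Zrel.

Definition circle : set (R * R) := [set z | z.1 ^+ 2 + z.2 ^+ 2 = 1].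
Definition S1 : topologicalType := set_type circle.

Lemma circle1 : circle (1, 0).
Proof. by rewrite /circle /= expr1n expr0n addr0. Qed.
Definition S1pt : S1 := exist _ (1, 0) (mem_set circle1).

Lemma circle_exp (t : R) : circle (cos (2 * pi * t), sin (2 * pi * t)).
Proof. by rewrite /circle /= cos2Dsin2. Qed.
Definition expS1 (t : R) : S1 :=
  exist _ (cos (2 * pi * t), sin (2 * pi * t)) (mem_set (circle_exp t)).

Definition JDom : topologicalType := {n : nat & 'rV[S1]_n}.

(** generating relations of J(S^1): moving the base point one step, and
    the inclusions J_n -> J_{n+1} appending the base point *)
Definition Jrel (p q : JDom) : Prop :=
  (exists (m : nat) (w : 'rV[S1]_m) (i j : 'I_m.+1),
      val j = (val i).+1 /\
      p = existT _ m.+1 (insert_at j S1pt w) /\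
      q = existT _ m.+1 (insert_at i S1pt w))
  \/
  (exists (m : nat) (w : 'rV[S1]_m),
      p = existT _ m w /\ q = existT _ m.+1 (insert_at ord_max S1pt w)).

Definition JS1 : topologicalType := quot_space Jrel.

Definition fformula (p : ZDom) : JDom :=
  let: existT n x := p in existT _ n (\row_j expS1 (\val x ord0 j)).
End Defs.

(* The face maps of Z insert a coordinate 0 or 1, and t |-> exp (2 pi i t) sends
   both to the base point, so f carries the generating identifications of |Z| to
   insertions of the base point, which generate J(S^1).  An inverse is induced by
   the angle map S^1 -> [0, 1): it respects insertions of the base point because
   the angle of 1 is 0, and composed with f it only turns coordinates 1 into 0,
   which |Z| identifies since both are faces of the same cube.  Continuity of the
   inverse is checked on each summand (S^1)^n, onto which [0, 1]^n surjects
   continuously; a continuous surjection from a compact space onto a Hausdorff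
   one is a quotient map. *)

From HB Require Import structures.
From mathcomp Require Import all_boot all_order all_algebra.
From mathcomp Require Import generic_quotient.
From mathcomp Require Import all_classical all_reals.
From mathcomp Require Import topology normedtype trigo.
From mathcomp Require Import lra zify.
Import numFieldNormedType.Exports.
From Stdlib Require Import Relations.Relation_Operators.

Set Implicit Arguments.
Unset Strict Implicit.
Unset Printing Implicit Defensive.
Import Order.TTheory GRing.Theory Num.Theory.
Local Open Scope classical_set_scope.
Local Open Scope ring_scope.
Local Open Scope quotient_scope.

Section GeneratedQuotient.
Context {T : topologicalType} (r : T -> T -> Prop).

Lemma quot_piP (p q : T) :
  quot_pi r p = quot_pi r q <-> clos_refl_sym_trans T r p q.
Proof. by split=> [/eqmodP/asboolP | h]; last apply/eqmodP/asboolP. Qed.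

Lemma quot_pi_rel (p q : T) : r p q -> quot_pi r p = quot_pi r q.
Proof. by move=> rpq; apply/quot_piP/rst_step. Qed.

Lemma quot_pi_repr (x : quot_space r) : quot_pi r (repr x) = x.
Proof. exact: reprK. Qed.

Lemma quot_pi_continuous : continuous (quot_pi r).
Proof. exact: pi_continuous. Qed.

Lemma quot_pi_respects {Y : Type} (g : T -> Y) :
  (forall p q, r p q -> g p = g q) ->
  forall p q, quot_pi r p = quot_pi r q -> g p = g q.
Proof.
by move=> g_r p q /quot_piP; elim=> [a b /g_r | a | a b _ -> | a b c _ -> _ ->].
Qed.

Definition quot_lift {Y : Type} (g : T -> Y) (x : quot_space r) : Y := g (repr x).

Lemma quot_liftE {Y : Type} (g : T -> Y) :
  (forall p q, r p q -> g p = g q) -> forall p, quot_lift g (quot_pi r p) = g p.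
Proof. by move=> g_r p; apply: (quot_pi_respects g_r); rewrite quot_pi_repr. Qed.

Lemma quot_lift_continuous {Y : topologicalType} (g : T -> Y) :
  (forall p q, r p q -> g p = g q) -> continuous g -> continuous (quot_lift g).
Proof.
move=> g_r cg; apply/quotient_continuous.
by have -> : quot_lift g \o \pi = g by apply/funext => p; exact: quot_liftE.
Qed.

End GeneratedQuotient.

Lemma mx_coord_continuous {T : topologicalType} m n (i : 'I_m) (j : 'I_n) :
  continuous (fun M : 'M[T]_(m, n) => M i j).
Proof.
move=> M A MA; exists (fun i' j' => if (i' == i) && (j' == j) then A else setT).
  by move=> i' j'; case: ifP => [/andP[/eqP -> /eqP ->] //|_]; exact: filterT.
by move=> N /(_ i j); rewrite !eqxx.
Qed.

Lemma continuous_mx_entries {Z T : topologicalType} m n (h : Z -> 'M[T]_(m, n)) :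
  (forall i j, continuous (fun z => h z i j)) -> continuous h.
Proof.
move=> ch z A [P hP sPA].
have : \forall z' \near z, forall ij : 'I_m * 'I_n, P ij.1 ij.2 (h z' ij.1 ij.2).
  by apply: filter_forall => -[i j]; exact: (ch i j z _ (hP i j)).
by apply: filterS => z' hz'; apply: sPA => i j; exact: (hz' (i, j)).
Qed.

Lemma hausdorff_inj {X Y : topologicalType} (phi : X -> Y) :
  continuous phi -> injective phi -> hausdorff_space Y -> hausdorff_space X.
Proof.
move=> cphi iphi hY p q cl; apply/iphi/hY => A B nA nB.
have [z [Az Bz]] := cl _ _ (cphi p _ nA) (cphi q _ nB).
by exists (phi z).
Qed.

Lemma mx_hausdorff {T : topologicalType} m n :
  hausdorff_space T -> hausdorff_space 'M[T]_(m, n).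
Proof.
move=> hT p q cl; apply/matrixP => i j; apply: hT => A B nA nB.
have [z [Az Bz]] := cl _ _ (@mx_coord_continuous _ _ _ i j p _ nA)
                          (@mx_coord_continuous _ _ _ i j q _ nB).
by exists (z i j).
Qed.

(* [e] is a closed map on [A], and [h] is continuous as [h @^-1` U] is the
   complement of the image of a closed subset of [A]. *)
Lemma compact_quotient_continuous {X Y Z : topologicalType} (A : set X)
    (e : X -> Y) (h : Y -> Z) :
  hausdorff_space Y -> compact A -> continuous e -> e @` A = [set: Y] ->
  {within A, continuous (h \o e)} -> continuous h.
Proof.
move=> hY cA ce eA che; apply/continuousP => U oU.
have /closed_subspaceP[K cK KA] : closed ((h \o e) @^-1` (~` U) : set (subspace A)).
  by apply: open_closedC; move/continuousP: che; apply.
have -> : h @^-1` U = ~` (e @` (A `&` K)).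
  apply/seteqP; split => [w Uw [x [Ax Kx] exw] | w nK].
    have : (K `&` A) x by [].
    by rewrite KA => -[/= + _]; rewrite exw.
  have [x Ax exw] : (e @` A) w by rewrite eA.
  apply: contrapT => nUw; apply: nK; exists x => //; split => //.
  have : (((h \o e) @^-1` (~` U)) `&` A) x by split => //=; rewrite exw.
  by rewrite -KA => -[].
apply/closed_openC/(compact_closed hY)/continuous_compact.
  exact: continuous_subspaceT.
exact: compact_closedI.
Qed.

Section Circle.
Variable R : realType.

Lemma S1_eq (u v : S1 R) : (val u).1 = (val v).1 -> (val u).2 = (val v).2 -> u = v.
Proof. by move=> h1 h2; apply/val_inj/injective_projections. Qed.

Lemma S1_sqr (w : S1 R) : (val w).1 ^+ 2 + (val w).2 ^+ 2 = 1.
Proof. by case: w => [[a b] /= /set_mem]. Qed.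

Lemma S1_fst_itv (w : S1 R) : -1 <= (val w).1 <= 1.
Proof.
rewrite -ler_norml -(@ler_pXn2r _ 2) ?nnegrE // real_normK ?num_real //.
by rewrite expr1n -(S1_sqr w) lerDl sqr_ge0.
Qed.

Lemma expS1_bool (e : bool) : expS1 e%:R = S1pt R.
Proof.
have e2pi : 2 * pi = pi *+ 2 :> R by rewrite mulr_natl.
by apply: S1_eq; case: e => /=; rewrite ?(mulr1, mulr0, e2pi, cos2pi, sin2pi, cos0, sin0).
Qed.

Lemma expS1_continuous : continuous (@expS1 R).
Proof.
apply: continuous_comp_initial => t.
have c2pi (f : R -> R) : continuous f -> continuous (fun x : R => f (2 * pi * x)).
  by move=> cf x; apply: continuous_comp; [exact: mulrl_continuous | exact: cf].
exact: cvg_pair (c2pi _ (@continuous_cos R) t) (c2pi _ (@continuous_sin R) t).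
Qed.

Lemma S1_hausdorff : hausdorff_space (S1 R).
Proof. exact: (hausdorff_inj (@initial_continuous _ _ _) val_inj (@norm_hausdorff _ _)). Qed.

(* The angle of [w] measured in turns, in [0, 1). *)
Definition ang (w : S1 R) : R :=
  if 0 <= (val w).2 then acos (val w).1 / (2 * pi)
  else 1 - acos (val w).1 / (2 * pi).

Lemma ang_itv (w : S1 R) : 0 <= ang w <= 1.
Proof.
have acos_ge0 := acos_ge0 (S1_fst_itv w); have acos_le := acos_lepi (S1_fst_itv w).
have pi_gt0 := @pi_gt0 R.
have pi2_gt0 : 0 < 2 * pi :> R by rewrite mulr_gt0.
have a0 : 0 <= acos (val w).1 / (2 * pi) := divr_ge0 acos_ge0 (ltW pi2_gt0).
have a1 : acos (val w).1 / (2 * pi) <= 1 by rewrite ler_pdivrMr // mul1r; lra.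
by rewrite /ang; case: ifP => _; lra.
Qed.

Lemma ang_pt : ang (S1pt R) = 0.
Proof. by rewrite /ang /= lexx acos1 mul0r. Qed.

Lemma angK : cancel ang (@expS1 R).
Proof.
move=> w; have pi2_gt0 : 0 < 2 * pi :> R by rewrite mulr_gt0 ?pi_gt0.
have turns (x : R) : 2 * pi * (x / (2 * pi)) = x by rewrite mulrC divfK ?gt_eqF.
have e2pi : 2 * pi = pi *+ 2 :> R by rewrite mulr_natl.
have sinw : sin (acos (val w).1) = `|(val w).2|.
  by rewrite sin_acos ?S1_fst_itv // -(S1_sqr w) addrAC subrr add0r sqrtr_sqr.
rewrite /ang; case: ifP => w2; apply: S1_eq => /=; change (sval w) with (val w);
  rewrite ?mulrBr ?mulr1 turns ?e2pi.
- by rewrite acosK ?in_itv ?S1_fst_itv.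
- by rewrite sinw ger0_norm.
- by rewrite cosB cos2pi sin2pi mul0r mul1r addr0 acosK ?in_itv ?S1_fst_itv.
- by rewrite sinB cos2pi sin2pi mul0r mul1r sub0r sinw ltr0_norm ?opprK // ltNge w2.
Qed.

Lemma ang_expS1 (t : R) : 0 <= t <= 1 -> ang (expS1 t) = if t == 1 then 0 else t.
Proof.
move=> /andP[t0 t1]; have pi_gt0 := @pi_gt0 R.
have pi2_gt0 : 0 < 2 * pi :> R by rewrite mulr_gt0.
have e2pi : 2 * pi = pi *+ 2 :> R by rewrite mulr_natl.
have turns (x : R) : 2 * pi * x / (2 * pi) = x by rewrite mulrC mulKf ?gt_eqF.
case: eqP => [->|/eqP t_neq1].
  by rewrite /ang /= mulr1 e2pi cos2pi sin2pi lexx acos1 mul0r.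
rewrite /ang /=; have [t_le|t_gt] := leP t 2^-1.
  have : 2 * pi * t <= 2 * pi * 2^-1 by rewrite ler_pM2l.
  have : 0 <= 2 * pi * t := mulr_ge0 (ltW pi2_gt0) t0.
  move=> ht0 ht1; have ht : 0 <= 2 * pi * t <= pi by apply/andP; split; lra.
  by rewrite sin_ge0_pi // cosK ?in_itv //= turns.
have : 2 * pi * 2^-1 < 2 * pi * t by rewrite ltr_pM2l.
have : 2 * pi * t < 2 * pi by rewrite gtr_pMr // lt_neqAle t_neq1.
move=> ht1 ht0; have ht : 0 < 2 * pi - 2 * pi * t < pi by apply/andP; split; lra.
have -> : cos (2 * pi * t) = cos (2 * pi - 2 * pi * t).
  by rewrite cosB e2pi cos2pi sin2pi mul0r mul1r addr0.
have -> : sin (2 * pi * t) = - sin (2 * pi - 2 * pi * t).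
  by rewrite sinB e2pi cos2pi sin2pi mul0r mul1r sub0r opprK.
rewrite oppr_ge0 leNgt sin_gt0_pi //= cosK; last first.
  by rewrite in_itv /=; case/andP: ht => /ltW -> /ltW ->.
rewrite -{1}[2 * pi]mulr1 -mulrBr turns; lra.
Qed.

End Circle.

Section RealizationZ.
Variable R : realType.
Local Notation C n := (set_type (@cube R n)).

Lemma cubeP n (x : C n) j : 0 <= val x ord0 j <= 1.
Proof. exact: (set_mem (valP x)). Qed.

Lemma cube_compact n : compact (@cube R n).
Proof.
have -> : @cube R n = [set v | forall j, `[0, 1]%classic (v ord0 j)].
  by apply/seteqP; split => v v01 j; have := v01 j; rewrite /= in_itv.
exact: rV_compact (fun _ => @segment_compact R 0 1).
Qed.

Definition Zpt n (x : C n) : realZ R := quot_pi (@Zrel R) (existT _ n x).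

Lemma Zpt_continuous n : continuous (@Zpt n).
Proof.
by move=> x; apply: continuous_comp; [exact: existT_continuous | exact: quot_pi_continuous].
Qed.

Definition endpoint (a : R) := exists e : bool, a = e%:R.

Lemma Zpt_face n (x y : C n) (i : 'I_n) :
  (forall j, j != i -> val x ord0 j = val y ord0 j) ->
  endpoint (val x ord0 i) -> endpoint (val y ord0 i) -> Zpt x = Zpt y.
Proof.
case: n x y i => [|n] x y i; first by case: i.
move=> xy [ex xi] [ey yi].
have u_cube : @cube R n (\row_k val x ord0 (lift i k)).
  by move=> k; rewrite mxE; exact: cubeP.
pose u : C n := SigSub (mem_set u_cube).
have face (z : C n.+1) (e : bool) : val z ord0 i = e%:R ->
    (forall k, val z ord0 (lift i k) = val x ord0 (lift i k)) -> Zpt z = Zpt u.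
  move=> zi zx; symmetry; apply: quot_pi_rel; exists n, u, z, i, e; split => //=.
  by apply/rowP => j; rewrite /insert_at !mxE; case: unliftP => [k ->|->]; rewrite ?mxE.
by rewrite (face x ex) ?(face y ey) // => k; rewrite xy // eq_sym neq_lift.
Qed.

Lemma Zpt_endpoints n (x y : C n) :
  (forall j, val x ord0 j = val y ord0 j \/
             endpoint (val x ord0 j) /\ endpoint (val y ord0 j)) ->
  Zpt x = Zpt y.
Proof.
move=> xy.
have mix_cube k : @cube R n (\row_j if (j < k)%N then val y ord0 j else val x ord0 j).
  by move=> j; rewrite mxE; case: ifP => _; exact: cubeP.
pose mix k : C n := SigSub (mem_set (mix_cube k)).
have x_mix : x = mix 0 by apply/val_inj/rowP => j; rewrite !mxE.
have y_mix : y = mix n by apply/val_inj/rowP => j; rewrite !mxE ltn_ord.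
have mixS k (lt_kn : (k < n)%N) : Zpt (mix k) = Zpt (mix k.+1).
  pose i := Ordinal lt_kn.
  have mix_neq j : j != i -> val (mix k) ord0 j = val (mix k.+1) ord0 j.
    move=> /eqP ji; have /negbTE jk : (j : nat) != k by apply/eqP => jk; apply/ji/val_inj.
    by rewrite !mxE ltnS [(j <= k)%N]leq_eqVlt jk.
  have [xyi|[xi yi]] := xy i.
    congr Zpt; apply/val_inj/rowP => j; have [->|/mix_neq //] := eqVneq j i.
    by rewrite !mxE /= ltnn ltnSn.
  by apply: (Zpt_face mix_neq); rewrite mxE /= ?ltnn ?ltnSn.
have mix_le k : (k <= n)%N -> Zpt (mix 0) = Zpt (mix k).
  elim: k => [_|k IH lt_kn]; first reflexivity.
  by rewrite IH; [exact: mixS | exact: ltnW].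
rewrite x_mix y_mix; exact: mix_le.
Qed.

End RealizationZ.

Section JamesCircle.
Variable R : realType.

Definition Jpt n (w : 'rV[S1 R]_n) : JS1 R := quot_pi (@Jrel R) (existT _ n w).

(* Move the base point to the last slot, where the inclusion J_m -> J_(m+1) drops it. *)
Lemma Jpt_insert_pt m (w : 'rV[S1 R]_m) (i : 'I_m.+1) :
  Jpt (insert_at i (S1pt R) w) = Jpt w.
Proof.
move: {2}(m - i)%N (erefl (m - i)%N) => d; elim: d i => [|d IH] i mi.
  have -> : i = ord_max by apply: val_inj => /=; have := ltn_ord i; lia.
  by symmetry; apply: quot_pi_rel; right; exists m, w.
have lt_i1 : (i.+1 < m.+1)%N by lia.
rewrite -(IH (Ordinal lt_i1)) /=; last by lia.
by symmetry; apply: quot_pi_rel; left; exists m, w, i, (Ordinal lt_i1).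
Qed.

Lemma fformula_Zrel (p q : ZDom R) : Zrel p q ->
  quot_pi (@Jrel R) (fformula p) = quot_pi (@Jrel R) (fformula q).
Proof.
case=> n [x [y [i [e [-> -> yx]]]]] /=.
have -> : \row_j expS1 (val y ord0 j) =
          insert_at i (S1pt R) (\row_j expS1 (val x ord0 j)).
  apply/rowP => j; rewrite yx /insert_at !mxE.
  by case: unlift => [k|]; rewrite ?mxE ?expS1_bool.
exact: (esym (Jpt_insert_pt _ i)).
Qed.

End JamesCircle.

Section AngleInverse.
Variable R : realType.
Local Notation C n := (set_type (@cube R n)).

Lemma ang_row_cube n (w : 'rV[S1 R]_n) : @cube R n (\row_j ang (w ord0 j)).
Proof. by move=> j; rewrite mxE; exact: ang_itv. Qed.

Definition ang_row n (w : 'rV[S1 R]_n) : C n := SigSub (mem_set (ang_row_cube w)).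

Definition Gpt (p : JDom R) : realZ R := let: existT n w := p in Zpt (ang_row w).

Lemma Gpt_insert_pt m (w : 'rV[S1 R]_m) (i : 'I_m.+1) :
  Gpt (existT _ m.+1 (insert_at i (S1pt R) w)) = Gpt (existT _ m w).
Proof.
symmetry; apply: quot_pi_rel.
exists m, (ang_row w), (ang_row (insert_at i (S1pt R) w)), i, false; split => //=.
apply/rowP => j; rewrite /insert_at !mxE.
by case: unlift => [k|]; rewrite ?mxE ?ang_pt.
Qed.

Lemma Gpt_Jrel (p q : JDom R) : Jrel p q -> Gpt p = Gpt q.
Proof.
by case=> [[m [w [i [j [_ [-> ->]]]]]] | [m [w [-> ->]]]]; rewrite !Gpt_insert_pt.
Qed.

Lemma Gpt_fformula (p : ZDom R) : Gpt (fformula p) = quot_pi (@Zrel R) p.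
Proof.
case: p => n x; apply: Zpt_endpoints => j /=; rewrite !mxE ang_expS1 ?cubeP //.
by case: eqP => [->|_]; [right; split; [exists false | exists true] | left].
Qed.

Lemma fformula_ang_row n (w : 'rV[S1 R]_n) :
  fformula (existT _ n (ang_row w)) = existT _ n w.
Proof. by congr existT; apply/rowP => j; rewrite !mxE angK. Qed.

Definition expS1_row n (x : 'rV[R]_n) : 'rV[S1 R]_n := \row_j expS1 (x ord0 j).

Lemma expS1_row_continuous n : continuous (@expS1_row n).
Proof.
apply: continuous_mx_entries => i j x; rewrite /expS1_row.
under eq_fun do rewrite mxE.
by apply: continuous_comp; [exact: mx_coord_continuous | exact: expS1_continuous].
Qed.

Lemma fformula_continuous : continuous (@fformula R).
Proof.
have -> : @fformula R = fun p => existT _ (projT1 p) (expS1_row (val (projT2 p))).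
  by apply/funext => -[].
apply: (@sigT_continuous _ _ _ (fun n (x : C n) => existT _ n (expS1_row (val x)))).
move=> n x; apply: continuous_comp; last exact: existT_continuous.
by apply: continuous_comp; [exact: initial_continuous | exact: expS1_row_continuous].
Qed.

Lemma Gpt_continuous : continuous Gpt.
Proof.
have -> : Gpt = fun p => Zpt (ang_row (projT2 p)) by apply/funext => -[].
apply: (@sigT_continuous _ _ _ (fun n (w : 'rV[S1 R]_n) => Zpt (ang_row w))) => n.
apply: (@compact_quotient_continuous _ _ _ (@cube R n) (@expS1_row n)).
- exact/mx_hausdorff/S1_hausdorff.
- exact: cube_compact.
- exact: expS1_row_continuous.
- apply/seteqP; split => // w _; exists (val (ang_row w)); first exact: cubeP.
  by apply/rowP => j; rewrite !mxE angK.
- apply/subspace_sigL_continuousP.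
  have -> : sigL (@cube R n) ((fun w => Zpt (ang_row w)) \o @expS1_row n) = @Zpt R n.
    by apply/funext => x; exact: (Gpt_fformula (existT _ n x)).
  exact: Zpt_continuous.
Qed.

End AngleInverse.

Theorem proposition6p8 (R : realType) :
  (forall p q : ZDom R, quot_pi (@Zrel R) p = quot_pi (@Zrel R) q ->
     quot_pi (@Jrel R) (fformula p) = quot_pi (@Jrel R) (fformula q)) /\
  exists f : realZ R -> JS1 R,
    (forall p : ZDom R, f (quot_pi (@Zrel R) p) = quot_pi (@Jrel R) (fformula p))
    /\ homeomorphism f.
Proof.
have f_Zrel := @fformula_Zrel R; have G_Jrel := @Gpt_Jrel R.
split; first exact: quot_pi_respects f_Zrel.
exists (quot_lift (quot_pi (@Jrel R) \o @fformula R)); split.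
  exact: quot_liftE f_Zrel.
exists (quot_lift (@Gpt R)); split.
- move=> x; rewrite -[x]quot_pi_repr (quot_liftE f_Zrel) (quot_liftE G_Jrel).
  exact: Gpt_fformula.
- move=> x; rewrite -[x]quot_pi_repr; case: (repr x) => n w.
  rewrite (quot_liftE G_Jrel) (quot_liftE f_Zrel).
  apply: (congr1 (quot_pi (@Jrel R))); exact: fformula_ang_row.
- apply: (quot_lift_continuous f_Zrel) => p.
  by apply: continuous_comp; [exact: fformula_continuous | exact: quot_pi_continuous].
- exact: (quot_lift_continuous G_Jrel (@Gpt_continuous R)).
Qed.
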